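(* Consider a black-white array (BWA) storing at most $n=2^m-1$ values, and average the cost of searching for a value not present in it over the $n$ possible configurations $\mathtt{total}\in\{1,\dots,n\}$. This average time is $O(\log^2 n)$.
   Context: A black-white array (BWA) of size $N=2^K$ stores values from a totally ordered set. Its white array is $W[1..N-1]$. For $i\ge0$, the segment of rank $i$ is the index block $[2^i,2^{i+1}-1]$, of length $2^i$. A state variable $\mathtt{total}$ counts stored values. The rank-$i$ segment is active iff bit $i$ of $\mathtt{total}$ is $1$; thus the configuration of the BWA is determined by $\mathtt{total}$. Between operations, all stored values lie in the active white segments, each sorted ascending. Search$(v)$: for $i=K-1$ down to $0$, if the rank-$i$ segment is active, binary-search the white rank-$i$ segment for $v$. A binary search of a segment of length $L$ costs $O(\log L+1)$. Return the index at the first success, or Nil if none. An unsuccessful search therefore binary-searches every active segment. *)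

From mathcomp Require Import all_boot.

(* Black-white array of size N = 2^K; white array W[1..N-1].
   The rank-i segment [2^i, 2^(i+1)-1] (length 2^i) is active iff
   bit i of [total] is 1. *)
Definition seg_active (total i : nat) : bool := odd (total %/ 2 ^ i).

(* Cost of an unsuccessful Search in a BWA of size 2^K with state [total],
   where [bs L] is the cost of binary-searching a segment of length L.
   The loop runs i = K-1 down to 0; each iteration pays one unit for the
   activity test, plus [bs (2^i)] if the rank-i segment is active
   (an unsuccessful search binary-searches every active segment). *)
Definition unsucc_search_cost (bs : nat -> nat) (K total : nat) : nat :=
  \sum_(i < K) (1 + (if seg_active total i then bs (2 ^ i) else 0)).

Definition total_unsucc_cost (bs : nat -> nat) (m : nat) : nat :=
  \sum_(1 <= t < (2 ^ m - 1).+1) unsucc_search_cost bs m t.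

From mathcomp Require Import all_boot.
From mathcomp Require Import zify.

Set Implicit Arguments.
Unset Strict Implicit.
Unset Printing Implicit Defensive.

(* The average is bounded by the worst case: each of the m segments of a BWA
   of size 2^m has length at most 2^(m-1), so every unsuccessful search costs
   at most m (1 + C m).  Since log2 n = m - 1 for n = 2^m - 1 and m <= 2 (m - 1)
   when m >= 2, this is at most 4 (1 + C) (log2 n)^2. *)

Lemma trunc_log_predn_expn (p m : nat) :
  1 < p -> 0 < m -> trunc_log p (p ^ m - 1) = m.-1.
Proof.
move=> p_gt1; case: m => // k _; apply: trunc_log_eq => //.
have pk_gt0 : 0 < p ^ k by rewrite expn_gt0 ltnW.
rewrite /= expnS; have := ltn_Pmull p_gt1 pk_gt0; lia.
Qed.

Lemma search_cost_expn2_le (C K : nat) (bs : nat -> nat) (i : nat) :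
  (forall L, bs L <= C * (trunc_log 2 L + 1)) ->
  i < K -> bs (2 ^ i) <= C * K.
Proof.
move=> bs_le lt_iK; apply: leq_trans (bs_le _) _.
by rewrite trunc_expnK // addn1 leq_mul2l lt_iK orbT.
Qed.

Lemma unsucc_search_cost_le (bs : nat -> nat) (c K t : nat) :
  (forall i, i < K -> bs (2 ^ i) <= c) ->
  unsucc_search_cost bs K t <= K * (1 + c).
Proof.
move=> bs_le; rewrite /unsucc_search_cost -[K in K * _]card_ord -sum_nat_const.
apply: leq_sum => i _; rewrite leq_add2l.
by case: ifP => // _; apply: bs_le.
Qed.

Lemma total_unsucc_cost_le (bs : nat -> nat) (b m : nat) :
  (forall t, unsucc_search_cost bs m t <= b) ->
  total_unsucc_cost bs m <= (2 ^ m - 1) * b.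
Proof.
move=> cost_le; rewrite /total_unsucc_cost.
apply: leq_trans (_ : \sum_(1 <= t < (2 ^ m - 1).+1) b <= _).
  by apply: leq_sum => t _.
by rewrite sum_nat_const_nat subn1.
Qed.

Theorem mainTheorem10 :
  forall C : nat, exists D : nat,
  forall bs : nat -> nat,
    (forall L, bs L <= C * (trunc_log 2 L + 1)) ->
  forall m : nat, 2 <= m ->
    let n := 2 ^ m - 1 in
    total_unsucc_cost bs m <= D * n * (trunc_log 2 n) ^ 2.
Proof.
move=> C; exists (4 * (1 + C)) => bs bs_le m m_ge2; cbv zeta.
rewrite trunc_log_predn_expn ?(ltn_trans _ m_ge2) //.
have cost_le t : unsucc_search_cost bs m t <= m * (1 + C * m).
  by apply: unsucc_search_cost_le => i; apply: search_cost_expn2_le.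
apply: leq_trans (total_unsucc_cost_le cost_le) _.
rewrite mulnAC [_ * (2 ^ m - 1)]mulnC leq_mul //.
by case: m m_ge2 {cost_le} => // k k_ge1 /=; nia.
Qed.
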